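(* Let $d=(d_1,\dots,d_n)$ be a degree sequence in nonincreasing order and let $e$ be obtained from $d$ by a unit transformation at indices $r<t$: $e_r=d_r-1$, $e_t=d_t+1$, $e_i=d_i$ for $i\notin\{r,t\}$, where $d_r\ge d_t+2$, $t$ is the first index after $r$ with $d_t\le d_r-2$, and $r$ is the last index before $t$ with $d_r\ge d_t+2$ (a trailing $0$ is appended to $d$ if needed, so $d$ and $e$ both have $n$ terms; then $e$ is again nonincreasing). Define $j_r=d_r+1$ if $d_r\ge r$ and $j_r=d_r$ if $d_r<r$; and $j_t=d_t+2$ if $d_t\ge t-1$ and $j_t=d_t+1$ if $d_t<t-1$. For an integer $k$, let $c_1(k)$ be the number of elements of the multiset $\{r,j_t\}$ that are $\le k$ (counted with multiplicity), and $c_{-1}(k)$ the number of elements of the multiset $\{t,j_r\}$ that are $\le k$ (counted with multiplicity). Then: (a) for every $k\le\min\{m(d),m(e)\}$, $\Delta_k(e)=\Delta_k(d)+c_1(k)-c_{-1}(k)$; (b) if $m(e)>m(d)$, then $\Delta_{m(e)}(e)=\Delta_{m(d)}(d)+2$.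
   Context: Degree sequences (of finite simple graphs, terms may be $0$) are listed in nonincreasing order. $m(d)=\max\{i : d_i\ge i-1\}$. For integers $k\ge 0$, $\Delta_k(d)=k(k-1)+\sum_{i>k}\min\{k,d_i\}-\sum_{i\le k}d_i$. *)

From mathcomp Require Import all_boot all_order all_algebra.
Set Implicit Arguments. Unset Strict Implicit. Unset Printing Implicit Defensive.
Import GRing.Theory Num.Theory.

(* 1-indexed access: dat d i = d_i for 1 <= i <= size d (0 beyond). *)
Definition dat (d : seq nat) (i : nat) : nat := nth 0 d i.-1.

Definition nonincr (d : seq nat) : bool := sorted geq d.

(* d is the degree sequence of a finite simple graph on vertices 1..n
   (vertex i+1 is represented by the ordinal i). *)
Definition graphic (d : seq nat) : Prop :=
  exists E : rel 'I_(size d),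
    irreflexive E /\ symmetric E /\
    forall i : 'I_(size d), #|[set j | E i j]| = nth 0 d i.

Definition mdeg (d : seq nat) : nat :=
  \max_(1 <= i < (size d).+1 | i.-1 <= dat d i) i.

Definition Delta (d : seq nat) (k : nat) : int :=
  ((k * (k - 1))%:Z + (\sum_(k.+1 <= i < (size d).+1) minn k (dat d i))%:Z
   - (\sum_(1 <= i < k.+1) dat d i)%:Z)%R.

Definition unit_transform (d e : seq nat) (r t : nat) : Prop :=
  [/\ size e = size d, 1 <= r, r < t & t <= size d] /\
  dat d t + 2 <= dat d r /\
  (forall i, r < i < t -> dat d r < dat d i + 2) /\  (* t first after r *)
  (forall i, r < i < t -> dat d i < dat d t + 2) /\  (* r last before t *)
  (forall i, 1 <= i <= size d ->
        dat e i = (if i == r then (dat d r).-1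
                   else if i == t then (dat d t).+1 else dat d i)).

Definition j_r (d : seq nat) (r : nat) : nat :=
  if r <= dat d r then (dat d r).+1 else dat d r.
Definition j_t (d : seq nat) (t : nat) : nat :=
  if t.-1 <= dat d t then (dat d t).+2 else (dat d t).+1.

Definition c1 (d : seq nat) (r t k : nat) : nat := (r <= k) + (j_t d t <= k).
Definition cm1 (d : seq nat) (r t k : nat) : nat := (t <= k) + (j_r d r <= k).

From mathcomp Require Import all_boot all_order all_algebra zify.
Import GRing.Theory Num.Theory.
Set Implicit Arguments. Unset Strict Implicit. Unset Printing Implicit Defensive.

(* Write Delta_k(d) = k(k-1) + sum_i contrib_k(i, d_i), where vertex i
   contributes -d_i if i <= k and min(k, d_i) otherwise (DeltaE).  The unit
   transformation changes only d_r (down by one) and d_t (up by one), so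
   Delta_k(e) - Delta_k(d) is the sum of two one-step contribution changes,
   which are explicit indicator expressions (Delta_transform).
   (a) For k <= min(m(d), m(e)), the definition of m together with the
       monotonicity of d and of e (e_nonincr) gives d_r >= k when r <= k and
       d_t >= k - 1 when t <= k; under these bounds the indicators are exactly
       the counts c_1(k) and c_{-1}(k) (j_r_le, j_t_le).
   (b) If m(e) > m(d), the new witness of m(e) must be t, whence d_t = t - 2
       and m(d) = t - 1; the transformation does not change Delta_t, and
       Delta_t(d) = Delta_{t-1}(d) + 2 by the one-step recurrence Delta_succ. *)

Lemma dat_big (d : seq nat) (i : nat) : size d < i -> dat d i = 0.
Proof. by move=> hi; rewrite /dat nth_default //; lia. Qed.

Lemma dat_antimono (d : seq nat) (i j : nat) :
  nonincr d -> 1 <= i -> i <= j -> dat d j <= dat d i.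
Proof.
move=> d_nonincr i_pos le_ij.
have [j_in | j_out] := leqP j (size d); last by rewrite dat_big.
have geq_trans : transitive geq by move=> a b c /= h1 h2; apply: leq_trans h2 h1.
apply: (sorted_leq_nth geq_trans (@leqnn) 0 d_nonincr); rewrite ?inE; lia.
Qed.

Lemma mdeg_wit (d : seq nat) : 0 < mdeg d ->
  [/\ 1 <= mdeg d, mdeg d <= size d & (mdeg d).-1 <= dat d (mdeg d)].
Proof.
pose good x := [&& 1 <= x, x <= size d & x.-1 <= dat d x].
suff : (mdeg d == 0) || good (mdeg d).
  by case/orP=> [/eqP-> // | /and3P[]].
rewrite /mdeg big_nat_cond.
apply: (big_ind (fun x => (x == 0) || good x)) => // [x y gx gy | i].
  by rewrite /maxn; case: ifP.
by case/andP=> /andP[i_pos i_le] i_good; rewrite /good i_good; apply/orP; right; lia.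
Qed.

Lemma mdeg_ge (d : seq nat) (i : nat) :
  1 <= i -> i <= size d -> i.-1 <= dat d i -> i <= mdeg d.
Proof.
move=> i_pos i_le i_good; apply: (@leq_bigmax_seq _ _ _ id) => //.
by rewrite mem_index_iota; lia.
Qed.

Lemma mdeg_head (d : seq nat) (i k : nat) :
  nonincr d -> 1 <= i -> i <= k -> k <= mdeg d -> k.-1 <= dat d i.
Proof.
move=> d_nonincr i_pos le_ik le_km.
have [_ m_le m_good] := @mdeg_wit d ltac:(lia).
have := dat_antimono d_nonincr i_pos (leq_trans le_ik le_km); lia.
Qed.

(* This makes Delta_k additive in
   the entries of d, so local changes of d give local changes of Delta_k. *)
Definition contrib (k i x : nat) : int :=
  if i <= k then (- Posz x)%R else Posz (minn k x).

Lemma Posz_sum (m n : nat) (F : nat -> nat) :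
  Posz (\sum_(m <= i < n) F i) = (\sum_(m <= i < n) Posz (F i))%R.
Proof. exact: (big_morph Posz PoszD (erefl (Posz 0))). Qed.

Lemma sum_nat_point (m n a : nat) (F : nat -> int) :
  m <= a < n -> (forall i, m <= i < n -> i != a -> F i = 0%R) ->
  (\sum_(m <= i < n) F i)%R = F a.
Proof.
move=> a_in F0; rewrite (bigD1_seq a) ?mem_index_iota ?iota_uniq //=.
rewrite big_seq_cond big1 ?addr0 // => i /andP[i_in i_a].
by apply: F0 => //; rewrite -mem_index_iota.
Qed.

Lemma sum_nat_points (m n a b : nat) (F : nat -> int) :
  m <= a -> a < b -> b < n ->
  (forall i, m <= i < n -> i != a -> i != b -> F i = 0%R) ->
  (\sum_(m <= i < n) F i)%R = (F a + F b)%R.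
Proof.
move=> m_a a_b b_n F0; rewrite (big_cat_nat (n := b)) /=; try lia.
rewrite (@sum_nat_point m b a) ?(@sum_nat_point b n b) //; try lia.
  by move=> i i_in i_b; apply: F0 => //; lia.
by move=> i i_in i_a; apply: F0 => //; lia.
Qed.

Lemma DeltaE (d : seq nat) (k n : nat) : k < n -> size d < n ->
  Delta d k = (Posz (k * (k - 1)) + \sum_(1 <= i < n) contrib k i (dat d i))%R.
Proof.
move=> k_n size_n.
rewrite /Delta [(\sum_(1 <= i < n) _)%R](big_cat_nat (n := k.+1)) /=; try lia.
have -> : (\sum_(1 <= i < k.+1) contrib k i (dat d i) =
           - Posz (\sum_(1 <= i < k.+1) dat d i))%R.
  rewrite Posz_sum -sumrN; apply: eq_big_nat => i /andP[_ i_k].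
  by rewrite /contrib ifT //; lia.
have tail0 i : size d < i -> contrib k i (dat d i) = 0%R.
  by move=> i_out; rewrite dat_big // /contrib; case: ifP; rewrite ?minn0.
have -> : (\sum_(k.+1 <= i < n) contrib k i (dat d i) =
           Posz (\sum_(k.+1 <= i < (size d).+1) minn k (dat d i)))%R.
  have sum0 m : size d <= m -> (\sum_(m.+1 <= i < n) contrib k i (dat d i))%R = 0%R.
    move=> size_m; rewrite big_nat_cond big1 // => i /andP[/andP[m_i _] _].
    by apply: tail0; lia.
  rewrite Posz_sum; have [k_size | size_k] := leqP k.+1 (size d).+1.
    rewrite (big_cat_nat k_size) /= ?sum0 ?addr0 //.
    by apply: eq_big_nat => i /andP[k_i _]; rewrite /contrib ifF //; lia.
  by rewrite sum0 ?big_geq //; lia.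
lia.
Qed.

Lemma Delta_two_point (d e : seq nat) (a b k : nat) :
  1 <= a -> a < b -> (forall i, 1 <= i -> i != a -> i != b -> dat e i = dat d i) ->
  Delta e k = (Delta d k + (contrib k a (dat e a) - contrib k a (dat d a))
                         + (contrib k b (dat e b) - contrib k b (dat d b)))%R.
Proof.
move=> a_pos a_b same; set n := (k + size d + size e + b).+1.
rewrite !(@DeltaE _ k n); try lia.
rewrite -(subrK (\sum_(1 <= i < n) contrib k i (dat d i))%R
                (\sum_(1 <= i < n) contrib k i (dat e i))%R) -sumrB.
rewrite (@sum_nat_points 1 n a b
  (fun i => contrib k i (dat e i) - contrib k i (dat d i))%R) /=; try lia.
by move=> i /andP[i_pos _] i_a i_b; rewrite same // subrr.
Qed.

Lemma contrib_pred (k i x : nat) : 0 < x ->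
  (contrib k i x.-1 - contrib k i x)%R = (Posz (i <= k)%N - Posz ((k < i) && (x <= k))%N)%R.
Proof. by move=> x_pos; rewrite /contrib; case: leqP => _; lia. Qed.

Lemma contrib_succ (k i x : nat) :
  (contrib k i x.+1 - contrib k i x)%R = (Posz ((k < i) && (x < k))%N - Posz (i <= k)%N)%R.
Proof. by rewrite /contrib; case: leqP => _; lia. Qed.

(* Delta_{k+1} - Delta_k, when no vertex after k+1 has degree above k:
   only vertex k+1 changes side, and the quadratic term grows by 2k. *)
Lemma Delta_succ (d : seq nat) (k : nat) :
  (forall i, k.+1 < i -> dat d i <= k) ->
  Delta d k.+1 =
    (Delta d k + Posz k.*2 - Posz (minn k (dat d k.+1)) - Posz (dat d k.+1))%R.
Proof.
move=> tail_small; set n := (k + size d).+2.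
rewrite !(@DeltaE _ _ n); try lia.
rewrite -(subrK (\sum_(1 <= i < n) contrib k i (dat d i))%R
                (\sum_(1 <= i < n) contrib k.+1 i (dat d i))%R) -sumrB.
rewrite (@sum_nat_point 1 n k.+1
  (fun i => contrib k.+1 i (dat d i) - contrib k i (dat d i))%R) /=; try lia.
  have -> : (contrib k.+1 k.+1 (dat d k.+1) - contrib k k.+1 (dat d k.+1)
            = - Posz (dat d k.+1) - Posz (minn k (dat d k.+1)))%R.
    by rewrite /contrib leqnn ltnn.
  nia.
move=> i /andP[i_pos _] i_k; rewrite /contrib.
have [i_le | i_gt] := leqP i k; first by rewrite ifT ?subrr //; lia.
by rewrite ifF ?ifF; have := tail_small i; lia.
Qed.

(* Comparisons with j_r and j_t, under the bounds that k <= m(d), m(e) provides. *)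
Lemma j_r_le (d : seq nat) (r k : nat) : (r <= k -> k <= dat d r) ->
  (j_r d r <= k) = (k < r) && (dat d r <= k).
Proof.
move=> bound; rewrite /j_r; have [r_k | k_r] := leqP r k.
  by have := bound r_k; case: ifP => ? ? /=; apply/idP/idP; lia.
by case: ifP => ? /=; apply/idP/idP; lia.
Qed.

Lemma j_t_le (d : seq nat) (t k : nat) : (t <= k -> k.-1 <= dat d t) ->
  (j_t d t <= k) = (k < t) && (dat d t < k).
Proof.
move=> bound; rewrite /j_t; have [t_k | k_t] := leqP t k.
  by have := bound t_k; case: ifP => ? ? /=; apply/idP/idP; lia.
by case: ifP => ? /=; apply/idP/idP; lia.
Qed.

Section UnitTransform.

Variables (d e : seq nat) (r t : nat).
Hypothesis d_nonincr : nonincr d.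
Hypotheses (size_e : size e = size d) (r_pos : 1 <= r) (r_lt_t : r < t)
           (t_le_size : t <= size d).
Hypothesis gap : dat d t + 2 <= dat d r.
Hypothesis t_first : forall i, r < i < t -> dat d r < dat d i + 2.
Hypothesis r_last : forall i, r < i < t -> dat d i < dat d t + 2.
Hypothesis e_def : forall i, 1 <= i <= size d ->
  dat e i = (if i == r then (dat d r).-1
             else if i == t then (dat d t).+1 else dat d i).

Lemma datE (i : nat) : 1 <= i ->
  dat e i = (if i == r then (dat d r).-1
             else if i == t then (dat d t).+1 else dat d i).
Proof.
move=> i_pos; have [i_le | i_gt] := leqP i (size d); first by apply: e_def; lia.
have /negbTE-> : i != r by apply/eqP; lia.
have /negbTE-> : i != t by apply/eqP; lia.
by rewrite !dat_big ?size_e.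
Qed.

Lemma datE_r : dat e r = (dat d r).-1.
Proof. by rewrite datE // eqxx. Qed.

Lemma datE_t : dat e t = (dat d t).+1.
Proof.
have /negbTE t_r : t != r by apply/eqP; lia.
by rewrite datE ?t_r ?eqxx //; lia.
Qed.

(* The transformed sequence is again nonincreasing: the choice of r and t
   guarantees that the entries strictly between r and t lie in
   [d_r - 1, d_t + 1]. *)
Lemma e_nonincr : nonincr e.
Proof.
apply/(sortedP 0) => i i_lt /=.
have := dat_antimono d_nonincr (isT : 0 < i.+1) (leqnSn i.+1).
have := r_last (i := i.+2); have := t_first (i := i.+1).
rewrite -[nth 0 e i]/(dat e i.+1) -[nth 0 e i.+1]/(dat e i.+2) !datE //.
have at_eq j m : j = m -> dat d j = dat d m by move->.
have := at_eq i.+1 r; have := at_eq i.+1 t; have := at_eq i.+2 r; have := at_eq i.+2 t.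
by case: (i.+1 =P r); case: (i.+1 =P t); case: (i.+2 =P r); case: (i.+2 =P t); lia.
Qed.

Lemma Delta_transform (k : nat) :
  Delta e k = (Delta d k + Posz (r <= k)%N - Posz ((k < r) && (dat d r <= k))%N
                 + Posz ((k < t) && (dat d t < k))%N - Posz (t <= k)%N)%R.
Proof.
have same i : 1 <= i -> i != r -> i != t -> dat e i = dat d i.
  by move=> i_pos /negbTE i_r /negbTE i_t; rewrite datE // i_r i_t.
rewrite (Delta_two_point k r_pos r_lt_t same) datE_r datE_t.
by rewrite contrib_pred ?contrib_succ ?addrA //; lia.
Qed.

(* Part (a): for k <= min(m(d), m(e)) the indicator terms of Delta_transform
   are exactly c_1(k) - c_{-1}(k), because such k force d_r >= k whenever
   r <= k (read off e at r) and d_t >= k - 1 whenever t <= k. *)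
Lemma Delta_transform_low (k : nat) : k <= minn (mdeg d) (mdeg e) ->
  Delta e k = (Delta d k + Posz (c1 d r t k) - Posz (cm1 d r t k))%R.
Proof.
move=> k_low.
have dr_big : r <= k -> k <= dat d r.
  move=> r_k; have := mdeg_head e_nonincr r_pos r_k ltac:(lia).
  by rewrite datE_r; lia.
have dt_big : t <= k -> k.-1 <= dat d t.
  by move=> t_k; apply: mdeg_head d_nonincr _ t_k _; lia.
rewrite Delta_transform /c1 /cm1 (j_r_le dr_big) (j_t_le dt_big); lia.
Qed.

(* If m(e) > m(d), the jump happens at t: no other index gained degree. *)
Lemma mdeg_jump_at_t : mdeg d < mdeg e -> mdeg e = t.
Proof.
move=> jump; have [m_pos m_le m_good] := @mdeg_wit e ltac:(lia).
apply/eqP/negPn/negP => m_t.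
suff : mdeg e <= mdeg d by lia.
apply: mdeg_ge; rewrite -?size_e //.
by move: m_good; rewrite datE // (negbTE m_t); case: eqP => [->|_]; lia.
Qed.

(* Part (b): then d_t = t - 2, m(d) = t - 1, the transformation leaves
   Delta_t unchanged, and Delta_t(d) = Delta_{t-1}(d) + 2. *)
Lemma Delta_transform_jump : mdeg d < mdeg e ->
  Delta e (mdeg e) = (Delta d (mdeg d) + 2)%R.
Proof.
move=> jump; have me_t := mdeg_jump_at_t jump.
have [_ _] := @mdeg_wit e ltac:(lia).
rewrite me_t datE_t => dt_ge.
have dt_lt : dat d t < t.-1.
  by rewrite ltnNge; apply/negP => /(mdeg_ge _ t_le_size); lia.
have [s t_s] : exists s, t = s.+2 by exists t.-2; lia.
have md : mdeg d = s.+1.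
  have := @dat_antimono d s.+1 t d_nonincr isT ltac:(lia).
  by have := @mdeg_ge d s.+1 isT ltac:(lia); lia.
have tail_small i : s.+2 < i -> dat d i <= s.+1.
  by have := @dat_antimono d t i d_nonincr ltac:(lia); lia.
rewrite Delta_transform md t_s Delta_succ // -t_s.
by rewrite leqnn ltnn /=; lia.
Qed.

End UnitTransform.

Theorem lemma14 (d e : seq nat) (r t : nat) :
  nonincr d -> graphic d -> unit_transform d e r t ->
  (forall k : nat, k <= minn (mdeg d) (mdeg e) ->
     Delta e k = (Delta d k + (c1 d r t k)%:Z - (cm1 d r t k)%:Z)%R) /\
  (mdeg d < mdeg e -> Delta e (mdeg e) = (Delta d (mdeg d) + 2)%R).
Proof.
move=> d_nonincr _ [[size_e r_pos r_lt_t t_le_size] [gap [t_first [r_last e_def]]]].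
split=> [k k_low | jump].
  by apply: Delta_transform_low; assumption.
by apply: (Delta_transform_jump (r := r) (t := t)); assumption.
Qed.
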